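(* Let $\mathcal{H}$ be a separable infinite-dimensional complex Hilbert space, let $T\in\mathscr{B}(\mathcal{H})$ have dense range and let $\varepsilon>0$. Then the map $x_0\mapsto y_{x_0,\varepsilon}$, from the open set $\{x_0\in\mathcal{H}:\|x_0\|>\varepsilon\}$ to $\mathcal{H}$, is continuous (for the norm topology).
   Context: For $T\in\mathscr{B}(\mathcal{H})$ with dense range, $x_0\neq 0$ and $0<\varepsilon<\|x_0\|$, the extremal vector $y_{x_0,\varepsilon}$ is the unique vector $y_0\in\mathcal{H}$ with $\|Ty_0-x_0\|\leqslant\varepsilon$ and $\|y_0\|=\inf\{\|y\|:\|Ty-x_0\|\leqslant\varepsilon\}$. *)

From HB Require Import structures.
From mathcomp Require Import all_boot all_order all_algebra.
From mathcomp Require Import all_classical all_reals all_analysis.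
From mathcomp Require Import complex.
Set Implicit Arguments. Unset Strict Implicit. Unset Printing Implicit Defensive.
Import Order.TTheory GRing.Theory Num.Theory Num.Def.
Import numFieldNormedType.Exports.
Local Open Scope classical_set_scope.
Local Open Scope ring_scope.
Local Open Scope complex_scope.

Definition is_inner_product (R : realType) (H : normedModType R[i])
  (ip : H -> H -> R[i]) : Prop :=
  [/\ (forall (a : R[i]) (x y z : H), ip (a *: x + y) z = a * ip x z + ip y z),
      (forall x y : H, ip y x = (ip x y)^*) &
      (forall x : H, ip x x = `|x| ^+ 2)].

Definition is_hilbert (R : realType) (H : completeNormedModType R[i]) : Prop :=
  exists ip : H -> H -> R[i], is_inner_product ip.

Definition separable (T : topologicalType) : Prop :=
  exists D : set T, countable D /\ dense D.

Definition infinite_dimensional (R : realType) (H : normedModType R[i]) : Prop :=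
  forall n : nat, exists v : 'I_n -> H,
    forall c : 'I_n -> R[i], \sum_(i < n) c i *: v i = 0 -> forall i, c i = 0.

Definition bounded_operator (R : realType) (H : normedModType R[i])
  (T : H -> H) : Prop := linear T /\ continuous T.

Definition is_extremal_vector (R : realType) (H : normedModType R[i])
  (T : H -> H) (x0 : H) (eps : R) (y0 : H) : Prop :=
  `|T y0 - x0| <= eps%:C /\
  (forall y : H, `|T y - x0| <= eps%:C -> `|y0| <= `|y|).

(* the extremal vector y_{x0,eps} (the unique such vector) *)
Definition extremal_vector (R : realType) (H : normedModType R[i])
  (T : H -> H) (eps : R) (x0 : H) : H :=
  xget 0 [set y0 | is_extremal_vector T x0 eps y0].

From HB Require Import structures.
From mathcomp Require Import all_boot all_order all_algebra.
From mathcomp Require Import all_classical all_reals all_analysis.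
From mathcomp Require Import complex.
From mathcomp Require Import ring lra.
Set Implicit Arguments. Unset Strict Implicit.
Import Order.TTheory GRing.Theory Num.Theory Num.Def.
Import numFieldNormedType.Exports.
Local Open Scope classical_set_scope.
Local Open Scope ring_scope.
Local Open Scope complex_scope.

(* By density of the range of T, each F_x = {y : |T y - x| <= eps} contains a z
   with |T z - x| < eps. F_x is convex, so by the parallelogram law the points of
   F_x whose norm is within d of inf_(F_x) |.| form sets of diameter -> 0 as
   d -> 0; they generate a Cauchy filter, whose limit is an extremal vector.
   For continuity at x0, with extremal vector y0, let d = |x0 - x1| and
   t = d / (eps - |T z - x0|). Moving y0 the fraction t towards z lands in F_x1,
   and moving the midpoint of y0 and y1 the fraction t towards z lands in F_x0;
   hence |y1| <= |y0| + t |z| and |(y0 + y1) / 2| >= |y0| - t |z|, and the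
   parallelogram law bounds |y0 - y1| by O(sqrt t). *)

Section RealNorm.
Variables (R : realType) (H : normedModType R[i]).
Implicit Types (x y a b : H) (t : R).

(* Norms in [H] are complex numbers with zero imaginary part; [rnorm] is the
   real-valued norm, on which the order is total. *)
Definition rnorm x : R := complex.Re `|x|.

Lemma rnormE x : `|x| = (rnorm x)%:C.
Proof. by rewrite /rnorm RRe_real // ger0_real. Qed.

Lemma rnorm_ge0 x : 0 <= rnorm x.
Proof. by rewrite -ler0c -rnormE normr_ge0. Qed.

Lemma ler_rnormD x y : rnorm (x + y) <= rnorm x + rnorm y.
Proof. by have := ler_normD x y; rewrite !rnormE -rmorphD lecR. Qed.

Lemma rnorm_distrC x y : rnorm (x - y) = rnorm (y - x).
Proof. by rewrite /rnorm distrC. Qed.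

Lemma rnormZ t x : rnorm (t%:C *: x) = `|t| * rnorm x.
Proof.
have normcR : `|t%:C| = `|t|%:C :> R[i].
  by rewrite normc_def /= expr0n /= addr0 sqrtr_sqr.
by have := normrZ t%:C x; rewrite normcR !rnormE -rmorphM => /complexI.
Qed.

Lemma lec_rnorm x t : (`|x| <= t%:C) = (rnorm x <= t).
Proof. by rewrite rnormE lecR. Qed.

Lemma ltc_rnorm x t : (`|x| < t%:C) = (rnorm x < t).
Proof. by rewrite rnormE ltcR. Qed.

Definition segment a b t : H := a + t%:C *: (b - a).

Definition midpoint a b : H := segment a b 2^-1.

Lemma rnorm_segment_le a b t : 0 <= t <= 1 ->
  rnorm (segment a b t) <= (1 - t) * rnorm a + t * rnorm b.
Proof.
case/andP=> t0 t1.
have -> : segment a b t = (1 - t)%:C *: a + t%:C *: b.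
  by rewrite /segment scalerBr rmorphB scalerBl scale1r addrA addrAC.
by apply: le_trans (ler_rnormD _ _) _; rewrite !rnormZ !ger0_norm ?subr_ge0.
Qed.

Lemma scale2_midpoint a b : (2 : R)%:C *: midpoint a b = a + b.
Proof.
rewrite /midpoint /segment scalerDr scalerA -rmorphM mulfV ?pnatr_eq0 //.
by rewrite rmorph1 scale1r rmorph_nat scaler_nat mulr2n -addrA subrKC.
Qed.

End RealNorm.

Section InnerProduct.
Variables (R : realType) (H : normedModType R[i]) (ip : H -> H -> R[i]).
Hypothesis ip_inner : is_inner_product ip.
Implicit Types x y a b : H.

Lemma parallelogram_law x y :
  rnorm (x + y) ^+ 2 + rnorm (x - y) ^+ 2 = 2 * rnorm x ^+ 2 + 2 * rnorm y ^+ 2.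
Proof.
have [ip_linear ip_conj ip_norm] := ip_inner.
have ipDl u v w : ip (u + v) w = ip u w + ip v w.
  by have := ip_linear 1 u v w; rewrite scale1r mul1r.
have ipBl u v w : ip (u - v) w = ip u w - ip v w.
  by have := ip_linear (-1) v u w; rewrite scaleN1r mulN1r addrC [- _ + _]addrC.
have ipDr u v w : ip w (u + v) = ip w u + ip w v.
  by rewrite !(ip_conj _ w) ipDl rmorphD.
have ipBr u v w : ip w (u - v) = ip w u - ip w v.
  by rewrite !(ip_conj _ w) ipBl rmorphB.
have : `|x + y| ^+ 2 + `|x - y| ^+ 2 = 2 * `|x| ^+ 2 + 2 * `|y| ^+ 2 :> R[i].
  by rewrite -!ip_norm ipDl ipBl !ipBr !ipDr; ring.
rewrite !rnormE -!rmorphXn -(rmorph_nat (real_complex R) 2) -!rmorphM -!rmorphD.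
exact: complexI.
Qed.

Lemma rnorm_sub_midpoint a b : rnorm (a - b) ^+ 2 =
  2 * rnorm a ^+ 2 + 2 * rnorm b ^+ 2 - 4 * rnorm (midpoint a b) ^+ 2.
Proof.
have := parallelogram_law a b.
rewrite -(scale2_midpoint a b) rnormZ ger0_norm // exprMn => <-; lra.
Qed.

End InnerProduct.

Lemma parallelogram_gap_lt (R : realType) (M a Y1 Y2 W D e : R) :
  0 <= M -> 0 <= a <= 1 -> a * (16 * M + 4) < e ^+ 2 -> 0 < e ->
  0 <= Y1 <= M + a -> 0 <= Y2 <= M + a -> M - a <= W -> 0 <= D ->
  D ^+ 2 = 2 * Y1 ^+ 2 + 2 * Y2 ^+ 2 - 4 * W ^+ 2 -> D < e.
Proof.
move=> M0 /andP[a0 a1] aM e0 /andP[Y10 Y1M] /andP[Y20 Y2M] MW D0 hD.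
have hY1 : Y1 ^+ 2 <= (M + a) ^+ 2 by rewrite !expr2; nra.
have hY2 : Y2 ^+ 2 <= (M + a) ^+ 2 by rewrite !expr2; nra.
have gap : D ^+ 2 <= 16 * M * a + 4 * a ^+ 2.
  rewrite hD; have [aM'|Ma] := leP a M.
    have hW : (M - a) ^+ 2 <= W ^+ 2 by rewrite !expr2; nra.
    move: hY1 hY2 hW; rewrite !expr2; nra.
  move: hY1 hY2; rewrite !expr2; nra.
have : D ^+ 2 < e ^+ 2 by move: gap aM; rewrite !expr2; nra.
by rewrite ltr_pXn2r // nnegrE ?(ltW e0).
Qed.

Lemma gt0_complexE (R : realType) (e : R[i]) : 0 < e -> exists2 r : R, 0 < r & e = r%:C.
Proof.
move=> e0; have eRe : e = (complex.Re e)%:C by rewrite RRe_real // gtr0_real.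
by exists (complex.Re e) => //; rewrite -ltcR -eRe.
Qed.

Lemma exists_small_pos (R : realType) (K e : R) : 0 <= K -> 0 < e ->
  exists a : R, [/\ 0 < a, a <= 1 & a * K < e].
Proof.
move=> K0 e0; exists (Num.min 1 (e / (K + 1))); split.
- by rewrite lt_min ltr01 divr_gt0 //; lra.
- by rewrite ge_min lexx.
- apply: (@le_lt_trans _ _ (e / (K + 1) * K)).
    by rewrite ler_wpM2r // ge_min lexx orbT.
  by rewrite mulrAC ltr_pdivrMr; nra.
Qed.

Section Extremal.
Variables (R : realType) (H : normedModType R[i]) (ip : H -> H -> R[i]).
Hypothesis ip_inner : is_inner_product ip.
Variable T : H -> H.
Hypotheses (T_linear : linear T) (T_continuous : continuous T).
Hypothesis T_dense : dense (range T).
Variable eps : R.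
Hypothesis eps_gt0 : 0 < eps.
Implicit Types x y z a b : H.

HB.instance Definition _ := GRing.isLinear.Build R[i] H H _ T T_linear.

Definition feasible x : set H := [set y | rnorm (T y - x) <= eps].

Lemma rnorm_T_segment_le x a b t : 0 <= t <= 1 ->
  rnorm (T (segment a b t) - x) <= (1 - t) * rnorm (T a - x) + t * rnorm (T b - x).
Proof.
move=> t01; have -> : T (segment a b t) - x = segment (T a - x) (T b - x) t.
  by rewrite /segment linearD linearZ linearB addrAC opprB addrA subrK.
exact: rnorm_segment_le.
Qed.

Lemma feasible_midpoint x a b :
  feasible x a -> feasible x b -> feasible x (midpoint a b).
Proof.
rewrite /feasible /= => xa xb.
have half : 0 <= (2^-1 : R) <= 1 by apply/andP; split; lra.
apply: le_trans (rnorm_T_segment_le x a b half) _.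
have : (1 - 2^-1) * rnorm (T a - x) <= (1 - 2^-1) * eps by rewrite ler_wpM2l //; lra.
have : 2^-1 * rnorm (T b - x) <= 2^-1 * eps by rewrite ler_wpM2l //; lra.
lra.
Qed.

Lemma exists_strictly_feasible x : exists z, rnorm (T z - x) < eps.
Proof.
have ball_neq0 : ball x eps%:C !=set0 by exists x; apply: ballxx; rewrite ltcR.
have [w [xw [z _ Tzw]]] := T_dense ball_neq0 (ball_open x eps%:C).
by exists z; move: xw; rewrite -ball_normE /= -Tzw ltc_rnorm rnorm_distrC.
Qed.

Definition min_norm x : R := inf [set rnorm y | y in feasible x].

Lemma min_norm_has_inf x : has_inf [set rnorm y | y in feasible x].
Proof.
split; last by exists 0 => _ [y _ <-]; exact: rnorm_ge0.
by have [z /ltW xz] := exists_strictly_feasible x; exists (rnorm z), z.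
Qed.

Lemma min_norm_le x y : feasible x y -> min_norm x <= rnorm y.
Proof. by move=> xy; apply: ge_inf; [case: (min_norm_has_inf x) | exists y]. Qed.

Lemma min_norm_ge0 x : 0 <= min_norm x.
Proof.
apply: lb_le_inf; first by case: (min_norm_has_inf x).
by move=> _ [y _ <-]; exact: rnorm_ge0.
Qed.

Definition near_min_norm x d : set H :=
  [set y | feasible x y /\ rnorm y < min_norm x + d].

Lemma near_min_norm_neq0 x d : 0 < d -> near_min_norm x d !=set0.
Proof.
move=> d0; have [_ [y xy <-] ny] := inf_adherent d0 (min_norm_has_inf x).
by exists y.
Qed.

Definition minimizing x := filter_from [set d : R | 0 < d] (near_min_norm x).

Lemma minimizing_proper x : ProperFilter (minimizing x).
Proof.
apply: filter_from_proper; last by move=> d; exact: near_min_norm_neq0.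
apply: filter_from_filter; first by exists 1; rewrite /= ltr01.
move=> d1 d2 /= d10 d20; exists (Num.min d1 d2); first by rewrite /= lt_min d10 d20.
by move=> y [xy ny]; split; split=> //; apply: (lt_le_trans ny);
  rewrite lerD2l ge_min lexx ?orbT.
Qed.

Lemma minimizing_cauchy x : cauchy (minimizing x).
Proof.
have minimizing_filter := minimizing_proper x.
apply: cauchy_exP => _ /gt0_complexE[e e0 ->].
have M0 := min_norm_ge0 x.
have [d [d0 d1 de]] :
    exists d : R, [/\ 0 < d, d <= 1 & d * (16 * min_norm x + 4) < e ^+ 2].
  by apply: exists_small_pos; [lra | exact: exprn_gt0].
have [y0 [xy0 ny0]] := near_min_norm_neq0 x d0.
exists y0, d => // b [xb nb]; rewrite -ball_normE /= ltc_rnorm.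
have Mmid := min_norm_le (feasible_midpoint xy0 xb).
apply: (parallelogram_gap_lt M0 _ de e0 _ _ _ _ (rnorm_sub_midpoint ip_inner y0 b));
  rewrite ?rnorm_ge0 ?(ltW d0) ?d1 //=; lra.
Qed.

Definition extremal x y :=
  feasible x y /\ forall y', feasible x y' -> rnorm y <= rnorm y'.

Lemma minimizing_limit_extremal x y : minimizing x --> y -> extremal x y.
Proof.
move=> xy; have minimizing_filter := minimizing_proper x.
have near_y e d : 0 < e -> 0 < d ->
    exists w, [/\ near_min_norm x d w, rnorm (y - w) < e & rnorm (T y - T w) < e].
  move=> e0 d0; have e0C : 0 < e%:C by rewrite ltcR.
  have close : minimizing x [set w | `|y - w| < e%:C].
    by move/fcvgrPdist_lt : xy; apply.
  have Tclose : minimizing x [set w | `|T y - T w| < e%:C].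
    by have /cvgrPdist_lt /(_ _ e0C) := @T_continuous y; apply: xy.
  have near_d : minimizing x (near_min_norm x d) by exists d.
  have [w [[yw Tyw] xw]] := filter_ex (filterI (filterI close Tclose) near_d).
  by exists w; split; rewrite // -ltc_rnorm.
have x_y : feasible x y.
  apply/ler_addgt0Pr => e e0; have [w [[xw _] _ Tyw]] := near_y e 1 e0 ltr01.
  have -> : T y - x = (T y - T w) + (T w - x) by rewrite addrA subrK.
  by apply: le_trans (ler_rnormD _ _) _; rewrite /feasible /= in xw; lra.
have y_min : rnorm y <= min_norm x.
  apply/ler_addgt0Pr => e e0; have e2 : 0 < e / 2 by lra.
  have [w [[_ nw] yw _]] := near_y _ _ e2 e2.
  by rewrite -(subrK w y); apply: le_trans (ler_rnormD _ _) _; lra.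
by split=> // y' x_y'; apply: le_trans y_min (min_norm_le x_y').
Qed.

Section Perturbation.
Variables (x0 x1 y0 y1 z : H) (t : R).
Hypotheses (ext0 : extremal x0 y0) (ext1 : extremal x1 y1) (t01 : 0 <= t <= 1).
Hypothesis dist_le : rnorm (x0 - x1) <= t * (eps - rnorm (T z - x0)).

Lemma extremal_rnorm_le : rnorm y1 <= rnorm y0 + t * rnorm z.
Proof.
have [[xy0 _] [_ y1_min]] := (ext0, ext1).
have [t0 t1] := andP t01.
have x1_segment : feasible x1 (segment y0 z t).
  rewrite /feasible /=.
  have -> : T (segment y0 z t) - x1 = (T (segment y0 z t) - x0) + (x0 - x1).
    by rewrite addrA subrK.
  apply: le_trans (ler_rnormD _ _) _.
  have := rnorm_T_segment_le x0 y0 z t01.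
  have : (1 - t) * rnorm (T y0 - x0) <= (1 - t) * eps by rewrite ler_wpM2l ?subr_ge0.
  have := dist_le; lra.
have := rnorm_segment_le y0 z t01; have := y1_min _ x1_segment.
have := rnorm_ge0 y0; nra.
Qed.

Lemma extremal_rnorm_midpoint_ge : rnorm y0 - t * rnorm z <= rnorm (midpoint y1 y0).
Proof.
have [[xy0 y0_min] [xy1 _]] := (ext0, ext1).
have [t0 t1] := andP t01.
set w := midpoint y1 y0.
have Tw : rnorm (T w - x0) <= eps + rnorm (x0 - x1) / 2.
  have half : 0 <= (2^-1 : R) <= 1 by apply/andP; split; lra.
  apply: le_trans (rnorm_T_segment_le x0 y1 y0 half) _.
  have Ty1 : rnorm (T y1 - x0) <= eps + rnorm (x0 - x1).
    have -> : T y1 - x0 = (T y1 - x1) + (x1 - x0) by rewrite addrA subrK.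
    by apply: le_trans (ler_rnormD _ _) _; rewrite (rnorm_distrC x1) lerD2r.
  have : (1 - 2^-1) * rnorm (T y1 - x0) <= (1 - 2^-1) * (eps + rnorm (x0 - x1)).
    by rewrite ler_wpM2l //; lra.
  have : 2^-1 * rnorm (T y0 - x0) <= 2^-1 * eps by rewrite ler_wpM2l //; lra.
  lra.
have x0_segment : feasible x0 (segment w z t).
  rewrite /feasible /=; apply: le_trans (rnorm_T_segment_le x0 w z t01) _.
  have : (1 - t) * rnorm (T w - x0) <= (1 - t) * (eps + rnorm (x0 - x1) / 2).
    by rewrite ler_wpM2l ?subr_ge0.
  have := dist_le; have := rnorm_ge0 (x0 - x1); nra.
have := y0_min _ x0_segment; have := rnorm_segment_le w z t01.
have := rnorm_ge0 w; nra.
Qed.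

End Perturbation.

Lemma extremal_continuous (f : H -> H) : (forall x, extremal x (f x)) -> continuous f.
Proof.
move=> f_ext x0; apply/cvgrPdist_lt => _ /gt0_complexE[e e0 ->].
set y0 := f x0; have M0 := rnorm_ge0 y0.
have [z Tz] := exists_strictly_feasible x0.
set r := rnorm (T z - x0) in Tz.
have [a [a0 a1 ae]] :
    exists a : R, [/\ 0 < a, a <= 1 & a * (16 * rnorm y0 + 4) < e ^+ 2].
  by apply: exists_small_pos; [lra | exact: exprn_gt0].
have nz := rnorm_ge0 z.
have rad0 : 0 < (eps - r) * a / (rnorm z + 1) by rewrite divr_gt0 ?mulr_gt0 //; lra.
apply/nbhs_normP; exists ((eps - r) * a / (rnorm z + 1))%:C; first by rewrite /= ltcR.
move=> x1; rewrite /= ltc_rnorm ltr_pdivlMr; last lra.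
set d := rnorm (x0 - x1) => hd.
pose t := d / (eps - r).
have t_d : t * (eps - r) = d by rewrite divfK // gt_eqF // subr_gt0.
have ta : t * (rnorm z + 1) < a.
  have : (eps - r) * (t * (rnorm z + 1)) < (eps - r) * a.
    by rewrite mulrA (mulrC (eps - r)) t_d.
  by rewrite ltr_pM2l // subr_gt0.
have t0 : 0 <= t by rewrite divr_ge0 ?rnorm_ge0 // subr_ge0 ltW.
have tz_a : t * rnorm z < a by lra.
have t01 : 0 <= t <= 1 by rewrite t0 /=; nra.
have d_le : d <= t * (eps - r) by rewrite t_d.
have := extremal_rnorm_le (f_ext x0) (f_ext x1) t01 d_le.
have := extremal_rnorm_midpoint_ge (f_ext x0) (f_ext x1) t01 d_le.
rewrite ltc_rnorm rnorm_distrC => mid_ge y1_le.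
apply: (parallelogram_gap_lt (a := t * rnorm z) M0 _ _ e0 _ _ _ (rnorm_ge0 _)
          (rnorm_sub_midpoint ip_inner (f x1) y0)); rewrite ?rnorm_ge0 //=.
- by rewrite mulr_ge0 //=; lra.
- by apply: le_lt_trans ae; rewrite ler_wpM2r //; lra.
- by rewrite lerDl mulr_ge0.
Qed.

End Extremal.

Lemma extremal_exists (R : realType) (H : completeNormedModType R[i])
    (ip : H -> H -> R[i]) (T : H -> H) (eps : R) x :
  is_inner_product ip -> linear T -> continuous T -> dense (range T) -> 0 < eps ->
  exists y, extremal T eps x y.
Proof.
move=> ip_inner T_linear T_continuous T_dense eps_gt0.
have minimizing_filter := minimizing_proper T_dense eps_gt0 x.
exists (lim (minimizing T eps x)); apply: minimizing_limit_extremal => //.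
exact/cauchy_cvgP/(minimizing_cauchy ip_inner).
Qed.

Lemma is_extremal_vectorE (R : realType) (H : normedModType R[i]) (T : H -> H)
    (eps : R) x y :
  is_extremal_vector T x eps y <-> extremal T eps x y.
Proof.
have normE y' : (`|y| <= `|y'|) = (rnorm y <= rnorm y') by rewrite !rnormE lecR.
rewrite /is_extremal_vector /extremal /feasible /= lec_rnorm.
split=> -[Txy y_min]; split=> // y'.
- by rewrite -lec_rnorm -normE; apply: y_min.
- by rewrite lec_rnorm normE; apply: y_min.
Qed.

Lemma extremal_vectorP (R : realType) (H : completeNormedModType R[i])
    (ip : H -> H -> R[i]) (T : H -> H) (eps : R) x :
  is_inner_product ip -> linear T -> continuous T -> dense (range T) -> 0 < eps ->
  extremal T eps x (extremal_vector T eps x).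
Proof.
move=> ip_inner T_linear T_continuous T_dense eps_gt0.
apply/is_extremal_vectorE; apply: xgetPex.
have [y xy] := extremal_exists x ip_inner T_linear T_continuous T_dense eps_gt0.
by exists y; apply/is_extremal_vectorE.
Qed.

Unset Implicit Arguments.
Set Strict Implicit.

Theorem mainTheorem8 (R : realType) (H : completeNormedModType R[i])
  (hH : is_hilbert H) (hsep : separable H) (hinf : infinite_dimensional H)
  (T : H -> H) (hT : bounded_operator T) (hdense : dense (range T))
  (eps : R) (heps : 0 < eps) :
  {within [set x0 : H | eps%:C < `|x0|], continuous (extremal_vector T eps)}.
Proof.
have [ip ip_inner] := hH; have [T_linear T_continuous] := hT.
apply/continuous_subspaceT/(extremal_continuous ip_inner T_linear hdense heps) => x.
exact: extremal_vectorP ip_inner T_linear T_continuous hdense heps.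
Qed.
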